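(* Let $\Phi\colon M_2(\mathbb C)\to M_2(\mathbb C)$ be a BJ isomorphism and let $\phi\colon\mathbb C^2\to\mathbb C^2$ be a bijection which maps orthonormal pairs onto orthonormal pairs and satisfies $\Phi(xy^\ast)\doteq\phi(x)\phi(y)^\ast$ for all $x,y\in\mathbb C^2$. Let $A=xy^\ast+\sigma x'(y')^\ast$, where $\{x,x'\}$ and $\{y,y'\}$ are orthonormal bases of $\mathbb C^2$ and $\sigma\in\mathbb C$ with $|\sigma|<1$. Then there exists $\tau\in\mathbb C$ with $|\tau|<1$ such that $\Phi(A)\doteq\phi(x)\phi(y)^\ast+\tau\,\phi(x')\phi(y')^\ast$.
   Context: $M_2(\mathbb C)$ carries the operator (spectral) norm. $X\perp Y$ (Birkhoff–James orthogonality) means $\|X+\lambda Y\|\ge\|X\|$ for all $\lambda\in\mathbb C$. A BJ isomorphism is a bijection $\Phi$ with $X\perp Y\iff\Phi(X)\perp\Phi(Y)$. $X\doteq Y$ means $\mathbb C X=\mathbb C Y$, i.e. $X$ and $Y$ are equal up to a nonzero scalar factor. *)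

From HB Require Import structures.
From mathcomp Require Import all_boot all_order all_algebra.
From mathcomp Require Import complex.
From mathcomp Require Import all_classical all_reals.
Set Implicit Arguments. Unset Strict Implicit. Unset Printing Implicit Defensive.
Import Order.TTheory GRing.Theory Num.Theory.
Local Open Scope ring_scope.
Local Open Scope complex_scope.

Section M2.
Variable R : realType.
Local Notation C := R[i].

Definition adjmx m n (A : 'M[C]_(m, n)) : 'M[C]_(n, m) := (map_mx (@conjc R) A)^T.

Definition cdot (u v : 'cV[C]_2) : C := (adjmx v *m u) 0 0.

Definition vnorm (v : 'cV[C]_2) : R :=
  Num.sqrt (\sum_(i < 2) Normc.normc (v i 0) ^+ 2).

Definition opnorm (X : 'M[C]_2) : R :=
  sup [set vnorm (X *m v) | v in [set v : 'cV[C]_2 | vnorm v = 1]]%classic.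

Definition BJorth (X Y : 'M[C]_2) : Prop :=
  forall lam : C, opnorm X <= opnorm (X + lam *: Y).

Definition BJiso (Phi : 'M[C]_2 -> 'M[C]_2) : Prop :=
  bijective Phi /\ forall X Y, BJorth X Y <-> BJorth (Phi X) (Phi Y).

Definition doteq (X Y : 'M[C]_2) : Prop :=
  exists c : C, c != 0 /\ X = c *: Y.

Definition orthonormal_pair (x x' : 'cV[C]_2) : Prop :=
  cdot x x = 1 /\ cdot x' x' = 1 /\ cdot x x' = 0.

Definition xystar (x y : 'cV[C]_2) : 'M[C]_2 := x *m adjmx y.

End M2.

From HB Require Import structures.
From mathcomp Require Import all_boot all_order all_algebra.
From mathcomp Require Import complex.
From mathcomp Require Import all_classical all_reals.
From mathcomp Require Import lra ring.
Import Order.TTheory GRing.Theory Num.Theory.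
Local Open Scope ring_scope.
Local Open Scope complex_scope.

(* In orthonormal frames A = x y^* + sigma x' y'^* becomes diag(1, sigma), and for
   |sigma| < 1 the matrices BJ-orthogonal to diag(1, sigma) are exactly those with a
   vanishing corner entry: otherwise, after scaling the corner to 1, a small real shift
   diag(1, sigma) - t Z has norm < 1.  Hence A and x y^* have the same BJ-complement
   {Y | x^* Y y = 0}.  Since Phi preserves BJ-orthogonality and maps x y^* to a
   multiple of phi(x) phi(y)^*, the complement of Phi(A) is {Y | phi(x)^* Y phi(y) = 0}.
   Conversely, a matrix N whose complement is {Z | Z_00 = 0} satisfies
   ||N|| <= |N_00| (it is orthogonal to N - N_00 diag(1, 0)), which kills the
   off-diagonal entries; and |N_11| = |N_00| is impossible, since N would then be
   orthogonal to diag(1, -N_11 / N_00).  So N is a nonzero multiple of diag(1, tau)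
   with |tau| < 1. *)

Section PerturbationBound.
Set Implicit Arguments. Unset Strict Implicit.
Variable R : realFieldType.

Lemma perturbed_sqr_le (t A B u a b : R) :
  0 <= t <= 1 -> 0 <= A -> 0 <= B -> u <= 1 -> 0 <= a -> 0 <= b ->
  ((1 - t) * a + t * A * b) ^+ 2 + (t * B * a + u * b) ^+ 2
    <= ((1 - t) ^+ 2 + t ^+ 2 * B ^+ 2 + t / 2) * a ^+ 2
       + (t ^+ 2 * A ^+ 2 + 2 * t * (A + B) ^+ 2 + u ^+ 2) * b ^+ 2.
Proof.
move=> /andP[t0 t1] A0 B0 u1 a0 b0.
have ab0 : 0 <= a * b by exact: mulr_ge0.
(* AM-GM on the cross terms: [2 t (A + B) a b <= t a^2 / 2 + 2 t (A + B)^2 b^2]. *)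
have amgm : 0 <= t / 2 * (a - 2 * (A + B) * b) ^+ 2 by rewrite mulr_ge0 ?sqr_ge0 //; lra.
have cross : (1 - t) * A + B * u <= A + B by nra.
have : 2 * t * ((1 - t) * A + B * u) * (a * b) <= 2 * t * (A + B) * (a * b).
  by rewrite ler_wpM2r // ler_wpM2l //; lra.
nra.
Qed.

(* The entrywise bound for [diag(1, s) - t Z] when [Z_00 = 1], with [A], [B], [G] the
   moduli of the other entries of [Z] and [(a, b)] those of a unit vector. *)
Lemma perturbation_bound (s A B G : R) :
  0 <= s -> s < 1 -> 0 <= A -> 0 <= B -> 0 <= G ->
  exists2 t : R, 0 < t <= 1 & forall a b : R, 0 <= a -> 0 <= b -> a ^+ 2 + b ^+ 2 = 1 ->
    ((1 - t) * a + t * A * b) ^+ 2 + (t * B * a + (s + t * G) * b) ^+ 2 <= 1 - t / 2.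
Proof.
move=> s0 s1 A0 B0 G0; set K := A + B + G; set L := (1 + K) ^+ 2.
have K0 : 0 <= K by rewrite /K; lra.
have L1 : 1 <= L by rewrite /L; nra.
have sqK X : 0 <= X -> X <= K -> X ^+ 2 <= K ^+ 2 by move=> X0 XK; rewrite ler_pXn2r ?nnegrE.
have AK2 : A ^+ 2 <= K ^+ 2 by apply: sqK; rewrite /K; lra.
have BK2 : B ^+ 2 <= K ^+ 2 by apply: sqK; rewrite /K; lra.
have GK2 : G ^+ 2 <= K ^+ 2 by apply: sqK; rewrite /K; lra.
have ABK2 : (A + B) ^+ 2 <= K ^+ 2 by apply: sqK; rewrite /K; lra.
(* Small enough for both coefficients of the bound of [perturbed_sqr_le] to be <= 1 - t/2. *)
set t := (1 - s) / (8 * L).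
have tL : t * L = (1 - s) / 8.
  by rewrite /t; field; rewrite gt_eqF // (lt_le_trans ltr01 L1).
have t0 : 0 < t by rewrite /t divr_gt0 //; lra.
have t8 : t <= 1 / 8 by nra.
have tG : t * G <= t * L by apply: ler_wpM2l; [exact: ltW | rewrite /L; nra].
exists t => [|a b a0 b0 ab]; first by rewrite t0 /=; lra.
set u := s + t * G.
have u1 : u <= 1 by rewrite /u; lra.
apply: le_trans (perturbed_sqr_le _ A0 B0 u1 a0 b0) _; first by rewrite ltW //=; lra.
have ca : (1 - t) ^+ 2 + t ^+ 2 * B ^+ 2 + t / 2 <= 1 - t / 2.
  have : t * (1 + B ^+ 2) <= t * L by apply: ler_wpM2l; [exact: ltW | rewrite /L; nra].
  nra.
have cb : t ^+ 2 * A ^+ 2 + 2 * t * (A + B) ^+ 2 + u ^+ 2 <= 1 - t / 2.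
  have : t ^+ 2 * A ^+ 2 + 2 * t * (A + B) ^+ 2 + 2 * t * G + t * G ^+ 2 <= 4 * (t * L).
    have : A ^+ 2 + 2 * (A + B) ^+ 2 + 2 * G + G ^+ 2 <= 4 * L by rewrite /L; nra.
    nra.
  have : u ^+ 2 <= s ^+ 2 + 2 * t * G + t * G ^+ 2.
    have : 0 <= (1 - s) * (t * G) by rewrite mulr_ge0 //; nra.
    have : 0 <= (1 - t) * (t * G ^+ 2).
      by apply: mulr_ge0; [lra | rewrite mulr_ge0 ?sqr_ge0 ?ltW].
    rewrite /u; nra.
  nra.
have := sqr_ge0 a; have := sqr_ge0 b; nra.
Qed.

End PerturbationBound.

Section M2.
Set Implicit Arguments. Unset Strict Implicit.
Variable R : realType.
Local Notation C := R[i].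
Local Notation normc := (@Normc.normc R).
Implicit Types (z : C) (p q u v x y : 'cV[C]_2) (M N P Q U X Y Z : 'M[C]_2).

Lemma normc_ge0 z : 0 <= normc z.
Proof. by case: z => a b; exact: sqrtr_ge0. Qed.

Lemma normc_gt0 z : (0 < normc z) = (z != 0).
Proof.
have [->|z0] := eqVneq z 0; first by rewrite Normc.normc0 ltxx.
rewrite lt_def normc_ge0 andbT; apply: contra z0 => /eqP /(@Normc.eq0_normc R) ->.
exact: eqxx.
Qed.

Lemma normc_real (x : R) : normc x%:C = `|x|.
Proof. by rewrite /= expr0n addr0 sqrtr_sqr. Qed.

Lemma normc_conj z : normc z^* = normc z.
Proof. by case: z => a b /=; rewrite sqrrN. Qed.

Lemma normc_sqr z : (normc z ^+ 2)%:C = z * z^*.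
Proof. by rewrite rmorphXn -sqr_normc. Qed.

Lemma normc_sqr_eq0 z : normc z ^+ 2 <= 0 -> z = 0.
Proof. by move=> h; apply: (@Normc.eq0_normc R); have := normc_ge0 z; nra. Qed.

Lemma normc_lin_le a b c d :
  normc (a * c + b * d) <= normc a * normc c + normc b * normc d.
Proof. by rewrite -!Normc.normcM; exact: le_normcD. Qed.

Lemma normc_cauchy_schwarz a b c d :
  normc (a * c + b * d) ^+ 2 <= (normc a ^+ 2 + normc b ^+ 2) * (normc c ^+ 2 + normc d ^+ 2).
Proof.
have := @le_normcD R (a * c) (b * d); rewrite !Normc.normcM.
have := normc_ge0 (a * c + b * d); have := normc_ge0 a; have := normc_ge0 b.
have := normc_ge0 c; have := normc_ge0 d.
have := sqr_ge0 (normc a * normc d - normc b * normc c); nra.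
Qed.

Lemma ord2P (i : 'I_2) : i = 0 \/ i = 1.
Proof. by case: i => [[|[|//]] ?]; [left | right]; exact: val_inj. Qed.

Lemma sum2E (V : nmodType) (F : 'I_2 -> V) : \sum_(i < 2) F i = F 0 + F 1.
Proof. by rewrite big_ord_recr big_ord1; congr (F _ + F _); exact: val_inj. Qed.

Lemma mulmx2E m n (X : 'M[C]_(m, 2)) (Y : 'M[C]_(2, n)) i j :
  (X *m Y) i j = X i 0 * Y 0 j + X i 1 * Y 1 j.
Proof. by rewrite mxE sum2E. Qed.

Definition sqnorm v : R := normc (v 0 0) ^+ 2 + normc (v 1 0) ^+ 2.

Lemma sqnorm_ge0 v : 0 <= sqnorm v.
Proof. by rewrite addr_ge0 ?sqr_ge0. Qed.

Lemma vnormE v : vnorm v = Num.sqrt (sqnorm v).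
Proof. by rewrite /vnorm sum2E. Qed.

Lemma vnorm_eq1 v : (vnorm v = 1) <-> (sqnorm v = 1).
Proof.
rewrite vnormE; split => [h|->]; last exact: sqrtr1.
by rewrite -[sqnorm v]sqr_sqrtr ?sqnorm_ge0 // h expr1n.
Qed.

Lemma cdotE (p q : 'cV[C]_2) : cdot p q = (q 0 0)^* * p 0 0 + (q 1 0)^* * p 1 0.
Proof. by rewrite /cdot mulmx2E !mxE. Qed.

Lemma cdot_sqnorm v : cdot v v = (sqnorm v)%:C.
Proof. by rewrite cdotE /sqnorm ![_^* * _]mulrC -!normc_sqr rmorphD. Qed.

Lemma sqnormZ z v : sqnorm (z *: v) = normc z ^+ 2 * sqnorm v.
Proof. by rewrite /sqnorm !mxE !Normc.normcM !exprMn mulrDr. Qed.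

Lemma sqnorm_delta (i : 'I_2) : sqnorm (delta_mx i 0) = 1.
Proof.
rewrite /sqnorm !mxE; case: i => [[|[|//]] ?] /=;
  rewrite !(expr0n, expr1n) /= !(addr0, add0r, sqrtr0, sqrtr1);
  by rewrite !(expr0n, expr1n) /= ?(addr0, add0r).
Qed.

Lemma mulmx_delta X i j : (X *m delta_mx j (0 : 'I_1)) i 0 = X i j.
Proof. by rewrite -[X *m _]colE mxE. Qed.

Lemma sqnorm_mulmx_le X v :
  sqnorm (X *m v) <= (\sum_(i < 2) \sum_(j < 2) normc (X i j) ^+ 2) * sqnorm v.
Proof.
rewrite /sqnorm !mulmx2E !sum2E mulrDl.
by apply: lerD; apply: normc_cauchy_schwarz.
Qed.

Definition unit_image X := [set vnorm (X *m v) | v in [set v | vnorm v = 1]]%classic.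

Lemma opnorm_has_sup X : has_sup (unit_image X).
Proof.
split.
  by exists (vnorm (X *m delta_mx 0 0)), (delta_mx 0 0) => //; apply/vnorm_eq1/sqnorm_delta.
exists (Num.sqrt (\sum_(i < 2) \sum_(j < 2) normc (X i j) ^+ 2)) => _ [v /= /vnorm_eq1 v1 <-].
by rewrite vnormE ler_wsqrtr // -[X in _ <= X]mulr1 -v1 sqnorm_mulmx_le.
Qed.

Lemma sqnorm_le_opnorm X v : sqnorm v = 1 -> sqnorm (X *m v) <= opnorm X ^+ 2.
Proof.
move=> v1; have : vnorm (X *m v) <= opnorm X.
  by apply: (sup_upper_bound (opnorm_has_sup X)); exists v => //; exact/vnorm_eq1.
rewrite vnormE => h; rewrite -(sqr_sqrtr (sqnorm_ge0 (X *m v))).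
by rewrite ler_pXn2r ?nnegrE ?sqrtr_ge0 // (le_trans (sqrtr_ge0 _) h).
Qed.

Lemma opnorm_ge0 X : 0 <= opnorm X.
Proof.
apply: le_trans (sqrtr_ge0 (sqnorm (X *m delta_mx 0 0))) _.
rewrite -vnormE; apply: (sup_upper_bound (opnorm_has_sup X)).
by exists (delta_mx 0 0) => //; apply/vnorm_eq1/sqnorm_delta.
Qed.

Lemma opnorm_ge X v K : 0 <= K -> sqnorm v = 1 -> K ^+ 2 <= sqnorm (X *m v) -> K <= opnorm X.
Proof.
move=> K0 v1 h; have := le_trans h (sqnorm_le_opnorm X v1).
by rewrite ler_pXn2r ?nnegrE ?opnorm_ge0.
Qed.

Lemma opnorm_le X K : 0 <= K ->
  (forall v, sqnorm v = 1 -> sqnorm (X *m v) <= K ^+ 2) -> opnorm X <= K.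
Proof.
move=> K0 h; apply: ge_sup; first by case: (opnorm_has_sup X).
move=> _ [v /= /vnorm_eq1 v1 <-]; rewrite vnormE -(ger0_norm K0) -sqrtr_sqr.
exact/ler_wsqrtr/h.
Qed.

Lemma opnormZ z X : opnorm (z *: X) = normc z * opnorm X.
Proof.
have le z' Y : opnorm (z' *: Y) <= normc z' * opnorm Y.
  apply: opnorm_le => [|v v1]; first by rewrite mulr_ge0 ?normc_ge0 ?opnorm_ge0.
  by rewrite -scalemxAl sqnormZ exprMn ler_wpM2l ?sqr_ge0 ?sqnorm_le_opnorm.
have [->|z0] := eqVneq z 0.
  by apply/eqP; rewrite eq_le le Normc.normc0 mul0r opnorm_ge0.
apply/eqP; rewrite eq_le le /= -ler_pdivlMl ?normc_gt0 //.
by have := le z^-1 (z *: X); rewrite scalerA mulVf // scale1r Normc.normcV.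
Qed.

Lemma entry_sqnorm_le v i : normc (v i 0) ^+ 2 <= sqnorm v.
Proof. by case: (ord2P i) => ->; rewrite /sqnorm ?lerDl ?lerDr sqr_ge0. Qed.

Lemma row_sqnorm_le_opnorm X i : normc (X i 0) ^+ 2 + normc (X i 1) ^+ 2 <= opnorm X ^+ 2.
Proof.
set r2 := _ + _; have r20 : 0 <= r2 by rewrite addr_ge0 ?sqr_ge0.
have [->|r2_neq0] := eqVneq r2 0; first by rewrite sqr_ge0.
set r := Num.sqrt r2; have r_gt0 : 0 < r by rewrite sqrtr_gt0 lt_def r2_neq0.
have r2E : r2 = r ^+ 2 by rewrite sqr_sqrtr.
clearbody r.
rewrite r2E ler_pXn2r ?nnegrE ?opnorm_ge0 ?(ltW r_gt0) //.
pose w : 'cV[C]_2 := \col_j ((r^-1)%:C * (X i j)^*).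
have normw j : normc (w j 0) = r^-1 * normc (X i j).
  by rewrite mxE Normc.normcM normc_real normc_conj ger0_norm // invr_ge0 ltW.
have Xw : (X *m w) i 0 = r%:C.
  rewrite mulmx2E !mxE [X i 0 * _]mulrCA [X i 1 * _]mulrCA -mulrDr.
  rewrite -[X i 0 * _]normc_sqr -[X i 1 * _]normc_sqr -rmorphD -rmorphM -/r2 r2E.
  by rewrite expr2 mulKf ?gt_eqF.
apply: (opnorm_ge (v := w)); first exact: ltW.
  by rewrite /sqnorm !normw !exprMn -mulrDr -/r2 r2E exprVn mulVf ?expf_neq0 ?gt_eqF.
by apply: le_trans _ (entry_sqnorm_le _ i); rewrite Xw normc_real ger0_norm ?(ltW r_gt0).
Qed.

Lemma col_sqnorm_le_opnorm X j : normc (X 0 j) ^+ 2 + normc (X 1 j) ^+ 2 <= opnorm X ^+ 2.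
Proof. by have := sqnorm_le_opnorm X (sqnorm_delta j); rewrite /sqnorm !mulmx_delta. Qed.

Lemma entry_le_opnorm X i j : normc (X i j) <= opnorm X.
Proof.
have := col_sqnorm_le_opnorm X j; have := opnorm_ge0 X; have := normc_ge0 (X i j).
have := sqr_ge0 (normc (X 0 j)); have := sqr_ge0 (normc (X 1 j)).
by case: (ord2P i) => ->; nra.
Qed.

Lemma adjmxM m n k (A : 'M[C]_(m, n)) (B : 'M[C]_(n, k)) :
  adjmx (A *m B) = adjmx B *m adjmx A.
Proof. by rewrite /adjmx map_mxM trmx_mul. Qed.

Lemma adjmxK m n (A : 'M[C]_(m, n)) : adjmx (adjmx A) = A.
Proof. by apply/matrixP => i j; rewrite !mxE conjcK. Qed.

Definition unitary X := adjmx X *m X = 1%:M.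

Lemma unitary_mulmx_adj U : unitary U -> U *m adjmx U = 1%:M.
Proof. exact: mulmx1C. Qed.

Lemma unitary_conjK P Q Y : unitary P -> unitary Q ->
  adjmx P *m (P *m Y *m adjmx Q) *m Q = Y.
Proof. by move=> hP hQ; rewrite !mulmxA hP mul1mx -mulmxA hQ mulmx1. Qed.

Lemma unitary_conjKV P Q Y : unitary P -> unitary Q ->
  P *m (adjmx P *m Y *m Q) *m adjmx Q = Y.
Proof.
move=> hP hQ.
by rewrite !mulmxA (unitary_mulmx_adj hP) mul1mx -mulmxA (unitary_mulmx_adj hQ) mulmx1.
Qed.

Lemma sqnorm_unitary U v : unitary U -> sqnorm (U *m v) = sqnorm v.
Proof.
move=> hU; apply: (@complexI R); rewrite -!cdot_sqnorm /cdot adjmxM.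
by rewrite -mulmxA (mulmxA (adjmx U)) hU mul1mx.
Qed.

Lemma opnorm_unitary P Q X : unitary P -> unitary Q ->
  opnorm (P *m X *m adjmx Q) = opnorm X.
Proof.
move=> hP hQ; have hQ' : unitary (adjmx Q) by rewrite /unitary adjmxK unitary_mulmx_adj.
apply/eqP; rewrite eq_le; apply/andP; split; apply: opnorm_le (opnorm_ge0 _) _ => v v1.
  rewrite -!mulmxA (sqnorm_unitary _ hP).
  by apply: sqnorm_le_opnorm; rewrite (sqnorm_unitary _ hQ').
have -> : X *m v = X *m adjmx Q *m (Q *m v) by rewrite -mulmxA (mulmxA (adjmx Q)) hQ mul1mx.
rewrite -(sqnorm_unitary _ hP) mulmxA [P *m (_ *m _)]mulmxA.
by apply: sqnorm_le_opnorm; rewrite (sqnorm_unitary _ hQ).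
Qed.

Lemma BJorth_unitary P Q X Y : unitary P -> unitary Q ->
  BJorth (P *m X *m adjmx Q) (P *m Y *m adjmx Q) <-> BJorth X Y.
Proof.
move=> hP hQ; have E lam : P *m X *m adjmx Q + lam *: (P *m Y *m adjmx Q)
    = P *m (X + lam *: Y) *m adjmx Q.
  by rewrite mulmxDr mulmxDl -scalemxAr -scalemxAl.
by split => h lam; have := h lam; rewrite ?E !opnorm_unitary.
Qed.

Lemma BJorth_scalel z X Y : z != 0 -> BJorth (z *: X) Y <-> BJorth X Y.
Proof.
move=> z0; have z_gt0 : 0 < normc z by rewrite normc_gt0.
split => h lam.
  by have := h (z * lam); rewrite -scalerA -scalerDr !opnormZ ler_pM2l.
have -> : z *: X + lam *: Y = z *: (X + (z^-1 * lam) *: Y).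
  by rewrite scalerDr scalerA mulrA mulfV // mul1r.
by rewrite !opnormZ ler_pM2l.
Qed.

Lemma BJorth_scaler z X Y : z != 0 -> BJorth X (z *: Y) <-> BJorth X Y.
Proof.
move=> z0; split => h lam; first by have := h (lam / z); rewrite scalerA mulfVK.
by have := h (lam * z); rewrite scalerA.
Qed.

Definition diag1 (s : C) : 'M[C]_2 :=
  \matrix_(i, j) (if i == j then (if i == 0 then 1 else s) else 0).

Lemma diag1_entries s :
  [/\ diag1 s 0 0 = 1, diag1 s 0 1 = 0, diag1 s 1 0 = 0 & diag1 s 1 1 = s].
Proof. by split; rewrite mxE. Qed.

Lemma opnorm_diag1 s : normc s <= 1 -> opnorm (diag1 s) = 1.
Proof.
move=> s1; have [d00 d01 d10 d11] := diag1_entries s.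
apply/eqP; rewrite eq_le; apply/andP; split.
  apply: opnorm_le ler01 _ => v v1; rewrite /sqnorm !mulmx2E d00 d01 d10 d11.
  rewrite mul1r !mul0r addr0 add0r Normc.normcM exprMn expr1n.
  have s2 : normc s ^+ 2 <= 1 by rewrite expr_le1 ?normc_ge0.
  by move: v1; rewrite /sqnorm; have := sqr_ge0 (normc (v 1 0)); nra.
apply: (opnorm_ge (v := delta_mx 0 0)) ler01 (sqnorm_delta 0) _.
by apply: le_trans (entry_sqnorm_le _ 0); rewrite mulmx_delta d00 Normc.normc1.
Qed.

Lemma BJorth_diag1_corner s Z : normc s <= 1 -> Z 0 0 = 0 -> BJorth (diag1 s) Z.
Proof.
move=> s1 Z00 lam; have [d00 _ _ _] := diag1_entries s; rewrite opnorm_diag1 //.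
apply: (opnorm_ge (v := delta_mx 0 0)) ler01 (sqnorm_delta 0) _.
apply: le_trans (entry_sqnorm_le _ 0).
by rewrite mulmx_delta mxE [(lam *: Z) _ _]mxE Z00 mulr0 addr0 d00 Normc.normc1.
Qed.

Lemma not_BJorth_diag1 s Z : normc s < 1 -> Z 0 0 = 1 -> ~ BJorth (diag1 s) Z.
Proof.
move=> s1 Z00 hZ.
have [t /andP[t0 t1] bound] := perturbation_bound (normc_ge0 s) s1
  (normc_ge0 (Z 0 1)) (normc_ge0 (Z 1 0)) (normc_ge0 (Z 1 1)).
suff lt1 : opnorm (diag1 s + - t%:C *: Z) < 1.
  by have := hZ (- t%:C); rewrite opnorm_diag1 ?(ltW s1) // leNgt lt1.
apply: (@le_lt_trans _ _ (Num.sqrt (1 - t / 2))); last first.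
  by rewrite -[X in _ < X]sqrtr1 ltr_sqrt ?ltr01 //; lra.
apply: opnorm_le => [|v v1]; first exact: sqrtr_ge0.
rewrite sqr_sqrtr; last lra.
have a0 := normc_ge0 (v 0 0); have b0 := normc_ge0 (v 1 0).
have normNt z : normc (- t%:C * z) = t * normc z.
  by rewrite Normc.normcM normcN normc_real ger0_norm ?ltW.
have row0 : normc (((diag1 s + - t%:C *: Z) *m v) 0 0)
    <= (1 - t) * normc (v 0 0) + t * normc (Z 0 1) * normc (v 1 0).
  rewrite mulmx2E !mxE /= Z00 mulr1 add0r -mulrA.
  apply: le_trans (normc_lin_le _ _ _ _) _.
  have -> : 1 - t%:C = (1 - t)%:C by rewrite rmorphB rmorph1.
  by rewrite normNt mulrA normc_real ger0_norm //; lra.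
have row1 : normc (((diag1 s + - t%:C *: Z) *m v) 1 0)
    <= t * normc (Z 1 0) * normc (v 0 0) + (normc s + t * normc (Z 1 1)) * normc (v 1 0).
  rewrite mulmx2E !mxE /= add0r -mulrA.
  apply: le_trans (normc_lin_le _ _ _ _) _; rewrite normNt mulrA lerD2l ler_wpM2r //.
  by apply: le_trans (le_normcD _ _) _; rewrite normNt.
apply: le_trans (bound _ _ a0 b0 v1); apply: lerD; rewrite ler_pXn2r ?nnegrE ?normc_ge0 //.
  by apply: le_trans row0; exact: normc_ge0.
by apply: le_trans row1; exact: normc_ge0.
Qed.

Lemma BJorth_diag1 s Z : normc s < 1 -> BJorth (diag1 s) Z <-> Z 0 0 = 0.
Proof.
move=> s1; split; last exact/BJorth_diag1_corner/ltW.
move=> hZ; apply/eqP; apply: contraPT hZ => Z00.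
rewrite -(BJorth_scaler _ _ (invr_neq0 Z00)); apply: not_BJorth_diag1 => //.
by rewrite mxE mulVf.
Qed.

Definition frame (p p' : 'cV[C]_2) : 'M[C]_2 :=
  \matrix_(i, j) (if j == 0 then p i 0 else p' i 0).

Lemma frame_unitary p p' : orthonormal_pair p p' -> unitary (frame p p').
Proof.
case=> pp [p'p' pp']; move: pp p'p' pp'; rewrite !cdotE => pp p'p' pp'.
have p'p : (p 0 0)^* * p' 0 0 + (p 1 0)^* * p' 1 0 = 0.
  rewrite -[LHS]conjcK rmorphD !rmorphM /= !conjcK.
  by rewrite [p 0 0 * _]mulrC [p 1 0 * _]mulrC pp' conjc0.
rewrite /unitary; apply/matrixP => i j; rewrite mulmx2E !mxE.
by case: (ord2P i) => ->; case: (ord2P j) => -> /=;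
  [exact: pp | exact: p'p | exact: pp' | exact: p'p'].
Qed.

Lemma frame_diag1 p p' q q' s :
  frame p p' *m diag1 s *m adjmx (frame q q') = xystar p q + s *: xystar p' q'.
Proof.
apply/matrixP => i j; rewrite !mulmx2E !mxE !big_ord1 !mxE /=.
by rewrite mulr1 !mulr0 addr0 add0r [p' i 0 * s]mulrC -mulrA.
Qed.

Lemma frame_corner p p' q q' Y :
  (adjmx (frame p p') *m Y *m frame q q') 0 0 = (adjmx p *m Y *m q) 0 0.
Proof. by rewrite !mulmx2E !mxE. Qed.

Lemma BJorth_rank_two x x' y y' s Y :
  orthonormal_pair x x' -> orthonormal_pair y y' -> normc s < 1 ->
  BJorth (xystar x y + s *: xystar x' y') Y <-> (adjmx x *m Y *m y) 0 0 = 0.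
Proof.
move=> hx hy s1; have hP := frame_unitary hx; have hQ := frame_unitary hy.
rewrite -(frame_diag1 x x' y y') -{1}(unitary_conjKV Y hP hQ) -(frame_corner x x' y y').
by apply: iff_trans (BJorth_unitary _ _ hP hQ) _; exact: BJorth_diag1.
Qed.

Lemma BJorth_rank_one x x' y y' Y :
  orthonormal_pair x x' -> orthonormal_pair y y' ->
  BJorth (xystar x y) Y <-> (adjmx x *m Y *m y) 0 0 = 0.
Proof.
move=> hx hy; rewrite -[xystar x y]addr0 -(scale0r (xystar x' y')).
by apply: BJorth_rank_two; rewrite ?Normc.normc0 ?ltr01.
Qed.

Section CornerComplement.
Variable N : 'M[C]_2.
Hypothesis hN : forall Z, BJorth N Z <-> Z 0 0 = 0.

Lemma opnorm_le_corner : opnorm N <= normc (N 0 0).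
Proof.
have : BJorth N (N - N 0 0 *: diag1 0) by apply/hN; rewrite !mxE /= mulr1 subrr.
move/(_ (-1)); rewrite scaleN1r opprB addrC subrK opnormZ opnorm_diag1 ?mulr1 //.
by rewrite Normc.normc0 ler01.
Qed.

Lemma opnorm_sqr_le_corner : opnorm N ^+ 2 <= normc (N 0 0) ^+ 2.
Proof. by rewrite ler_pXn2r ?nnegrE ?opnorm_ge0 ?normc_ge0 // opnorm_le_corner. Qed.

Lemma offdiag_eq0 : N 0 1 = 0 /\ N 1 0 = 0.
Proof.
have := opnorm_sqr_le_corner; split; apply: normc_sqr_eq0.
  by have := row_sqnorm_le_opnorm N 0; lra.
by have := col_sqnorm_le_opnorm N 0; lra.
Qed.

Lemma corner_neq0 : N 0 0 != 0.
Proof.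
apply/eqP => a0; have [d00 _ _ _] := diag1_entries 0.
suff /hN : BJorth N (diag1 0) by rewrite d00 => /eqP; rewrite oner_eq0.
move=> lam; apply: le_trans (opnorm_ge0 _).
by have := opnorm_le_corner; rewrite a0 Normc.normc0.
Qed.

Lemma corner_dominates : normc (N 1 1) < normc (N 0 0).
Proof.
have [N01 _] := offdiag_eq0; set a := N 0 0; set d := N 1 1.
have a0 := corner_neq0; have a_gt0 : 0 < normc a by rewrite normc_gt0.
rewrite lt_neqAle; apply/andP; split; last first.
  have := col_sqnorm_le_opnorm N 1; have := opnorm_sqr_le_corner.
  rewrite N01 Normc.normc0 expr0n add0r -/a -/d; have := normc_ge0 d; nra.
(* Equal moduli would make N orthogonal to diag(1, -d/a), whose corner is 1. *)
apply/eqP => da; have [d00 _ _ _] := diag1_entries (- (d / a)).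
suff /hN : BJorth N (diag1 (- (d / a))) by rewrite d00 => /eqP; rewrite oner_eq0.
move=> lam; apply: le_trans opnorm_le_corner _.
have M00 := entry_le_opnorm (N + lam *: diag1 (- (d / a))) 0 0.
have M11 := entry_le_opnorm (N + lam *: diag1 (- (d / a))) 1 1.
rewrite !mxE /= mulr1 -/a in M00.
rewrite !mxE /= -/d in M11.
have e : d + lam * - (d / a) = d / a * (a - lam) by rewrite mulrBr divfK // mulrN mulrC.
rewrite e !Normc.normcM Normc.normcV da divff ?mul1r ?gt_eqF // in M11.
have : normc a *+ 2 <= normc (a + lam) + normc (a - lam).
  by rewrite -normcMn; apply: le_trans (le_normcD _ _); rewrite addrACA subrr addr0 mulr2n.
rewrite mulr2n; lra.
Qed.

Lemma eq_scale_diag1 : N = N 0 0 *: diag1 (N 1 1 / N 0 0).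
Proof.
have [N01 N10] := offdiag_eq0; have a0 := corner_neq0.
apply/matrixP => i j; rewrite !mxE.
by case: (ord2P i) => ->; case: (ord2P j) => -> /=;
  rewrite ?mulr1 ?mulr0 // mulrCA divff ?mulr1.
Qed.

End CornerComplement.

Lemma doteq_of_BJorth_corner M u u' v v' :
  orthonormal_pair u u' -> orthonormal_pair v v' ->
  (forall Y, BJorth M Y <-> (adjmx u *m Y *m v) 0 0 = 0) ->
  exists tau, normc tau < 1 /\ doteq M (xystar u v + tau *: xystar u' v').
Proof.
move=> hu hv hM; have hP := frame_unitary hu; have hQ := frame_unitary hv.
set N := adjmx (frame u u') *m M *m frame v v'.
have hN Z : BJorth N Z <-> Z 0 0 = 0.
  apply: iff_trans (iff_sym (BJorth_unitary _ _ hP hQ)) _.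
  rewrite unitary_conjKV //; apply: iff_trans (hM _) _.
  by rewrite -(frame_corner u u' v v') unitary_conjK.
have a_gt0 : 0 < normc (N 0 0) by rewrite normc_gt0 corner_neq0.
exists (N 1 1 / N 0 0); split.
  by rewrite Normc.normcM Normc.normcV ltr_pdivrMr // mul1r corner_dominates.
exists (N 0 0); split; first exact: corner_neq0.
rewrite -[M](unitary_conjKV M hP hQ) -/N {1}(eq_scale_diag1 hN).
by rewrite -scalemxAr -scalemxAl frame_diag1.
Qed.

End M2.

Theorem lemma5p8 (R : realType)
  (Phi : 'M[R[i]]_2 -> 'M[R[i]]_2) (phi : 'cV[R[i]]_2 -> 'cV[R[i]]_2) :
  BJiso Phi ->
  bijective phi ->
  (forall u u' : 'cV[R[i]]_2, orthonormal_pair u u' <-> orthonormal_pair (phi u) (phi u')) ->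
  (forall u v : 'cV[R[i]]_2, doteq (Phi (xystar u v)) (xystar (phi u) (phi v))) ->
  forall (x x' y y' : 'cV[R[i]]_2) (sigma : R[i]),
    orthonormal_pair x x' -> orthonormal_pair y y' -> Normc.normc sigma < 1 ->
    exists tau : R[i], Normc.normc tau < 1 /\
      doteq (Phi (xystar x y + sigma *: xystar x' y'))
            (xystar (phi x) (phi y) + tau *: xystar (phi x') (phi y')).
Proof.
move=> [[Psi _ PsiK] hPhi] _ hphi hrank x x' y y' sigma hx hy hsigma.
have hu := (hphi x x').1 hx; have hv := (hphi y y').1 hy.
apply: (doteq_of_BJorth_corner hu hv) => Y.
have [c [c0 hc]] := hrank x y.
have e1 : BJorth (Phi (xystar x y + sigma *: xystar x' y')) Y
    <-> BJorth (xystar x y + sigma *: xystar x' y') (Psi Y).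
  by rewrite -{1}[Y]PsiK; exact: iff_sym (hPhi _ _).
have e2 : BJorth (xystar x y) (Psi Y) <-> BJorth (xystar (phi x) (phi y)) Y.
  by apply: iff_trans (hPhi _ _) _; rewrite PsiK hc; exact: BJorth_scalel.
apply: iff_trans e1 _.
apply: iff_trans (BJorth_rank_two _ hx hy hsigma) _.
apply: iff_trans (iff_sym (BJorth_rank_one _ hx hy)) _.
apply: iff_trans e2 _.
exact: BJorth_rank_one _ hu hv.
Qed.
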